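(* Assume (A2) and a congestion game payoff structure in which each resource reward $w_r$ is continuously differentiable. Then the steady-state game is a full potential game: there exists a continuously differentiable $U:\mathbb R^n_{\ge0}\to\mathbb R$ with $\mathcal F=\nabla U$ on $X_{\mathcal U_D}$. Moreover, if every $w_r$ is nonincreasing, the set of Nash equilibria of $\mathcal F$ is compact and convex; and if every $w_r$ is strictly decreasing, the equilibrium resource flows $\sigma_r(x)$, $r\in\mathcal R$, take the same value at every Nash equilibrium $x$ of $\mathcal F$.
   Context: Model: classes $c\in[C]$ with masses $m^c>0$, finite state sets $\mathcal S^c$, nonempty finite admissible action sets $\mathcal A^c(s)$ ($\mathcal A^c=\bigcup_s\mathcal A^c(s)$), transition kernels $\phi^c(\cdot\mid s,a)$. $\mathcal U^c_D$ = deterministic policies (maps assigning to each $s$ an action $u(s)\in\mathcal A^c(s)$), $n^c=|\mathcal U^c_D|$, $n=\sum_cn^c$. $\phi^{c,u}_{ss'}=\phi^c(s\mid s',u(s'))$. (A2): for all $c,u\in\mathcal U^c_D$, $\phi^{c,u}$ has exactly one recurrent communicating class; $\eta^{c,u}$ is the unique stationary distribution of the continuous-time chain with generator $\lambda(\phi^{c,u}-I)$. Congestion game payoff structure: all classes have the same action rate $\lambda>0$; there is a finite set of resources $\mathcal R$ and each action $a\in\mathcal A^c$ is a subset $a\subseteq\mathcal R$; each resource has a reward function $w_r:\mathbb R_{\ge0}\to\mathbb R$; for a state-action distribution $\nu=(\nu^c)_c$, $\nu^c\in\mathbb R_{\ge0}^{\mathcal S^c\times\mathcal A^c}$ with total mass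 $m^c$, the flow on $r$ is $\sigma_r=\lambda\sum_c\sum_{s\in\mathcal S^c}\sum_{a\in\mathcal A^c: r\in a}\nu^c[s,a]$ and the single-stage reward is $r^c(s,a,\nu)=\sum_{r\in a}w_r(\sigma_r)$. Steady-state game: $X_{\mathcal U_D}=\prod_c\{x^c\in\mathbb R_{\ge0}^{n^c}:\sum x^c=m^c\}$; for $x\in X_{\mathcal U_D}$, the induced steady-state flow is $\sigma_r(x)=\lambda\sum_c\sum_{s\in\mathcal S^c}\sum_{u\in\mathcal U^c_D: r\in u(s)}\eta^{c,u}(s)x^c[u]$ and $\mathcal F^c_u(x)=\sum_{s\in\mathcal S^c}\eta^{c,u}(s)\sum_{r\in u(s)}w_r(\sigma_r(x))$, $\mathcal F=(\mathcal F^c_u)_{c,u}\in\mathbb R^n$. $x$ is a Nash equilibrium of $\mathcal F$ if for all $c,u$: $x^c[u]>0\Rightarrow\mathcal F^c_u(x)\ge\mathcal F^c_v(x)$ for all $v\in\mathcal U^c_D$. *)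

From HB Require Import structures.
From mathcomp Require Import all_boot all_order all_algebra.
From mathcomp Require Import all_classical all_reals all_analysis.
Set Implicit Arguments. Unset Strict Implicit. Unset Printing Implicit Defensive.
Import Order.TTheory GRing.Theory Num.Theory.
Import numFieldNormedType.Exports.
Local Open Scope ring_scope.

(* Data of the model:
   Cl : finType of classes; St c : finite state set of class c;
   Rs : finite set of resources; an action is a subset of Rs, i.e. {set Rs};
   Adm c s : {set {set Rs}} = admissible actions A^c(s);
   phi c s' s a = phi^c(s' | s, a) (probability of next state s'). *)

Definition pol (Rs : finType) (Cl : finType) (St : Cl -> finType)
  (Adm : forall c, St c -> {set {set Rs}}) (c : Cl) : finType :=
  {f : {ffun St c -> {set Rs}} | [forall s, f s \in Adm c s]}.

Definition idx (Rs Cl : finType) (St : Cl -> finType)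
  (Adm : forall c, St c -> {set {set Rs}}) : finType :=
  {c : Cl & pol Adm c}.

(* phi^{c,u}_{s s'} = phi^c(s | s', u(s')) *)
Definition Phi (R : realType) (Rs Cl : finType) (St : Cl -> finType)
  (Adm : forall c, St c -> {set {set Rs}})
  (phi : forall c, St c -> St c -> {set Rs} -> R)
  (c : Cl) (u : pol Adm c) (s s' : St c) : R :=
  phi c s s' (val u s').

Definition trans_edge (R : realType) (Rs Cl : finType) (St : Cl -> finType)
  (Adm : forall c, St c -> {set {set Rs}})
  (phi : forall c, St c -> St c -> {set Rs} -> R)
  (c : Cl) (u : pol Adm c) : rel (St c) :=
  fun s t => 0 < Phi phi u t s.

Definition reach (R : realType) (Rs Cl : finType) (St : Cl -> finType)
  (Adm : forall c, St c -> {set {set Rs}})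
  (phi : forall c, St c -> St c -> {set Rs} -> R)
  (c : Cl) (u : pol Adm c) : rel (St c) :=
  connect (trans_edge phi u).

(* for a finite chain, a state is recurrent iff every state accessible from
   it leads back to it; recurrent communicating classes are the communicating
   classes of recurrent states *)
Definition recurrent_state (R : realType) (Rs Cl : finType) (St : Cl -> finType)
  (Adm : forall c, St c -> {set {set Rs}})
  (phi : forall c, St c -> St c -> {set Rs} -> R)
  (c : Cl) (u : pol Adm c) (s : St c) : Prop :=
  forall t, reach phi u s t -> reach phi u t s.

Definition unique_recurrent_class (R : realType) (Rs Cl : finType)
  (St : Cl -> finType) (Adm : forall c, St c -> {set {set Rs}})
  (phi : forall c, St c -> St c -> {set Rs} -> R)
  (c : Cl) (u : pol Adm c) : Prop :=
  exists s0, recurrent_state phi u s0 /\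
    forall s, recurrent_state phi u s -> reach phi u s s0 /\ reach phi u s0 s.

Definition A2 (R : realType) (Rs Cl : finType) (St : Cl -> finType)
  (Adm : forall c, St c -> {set {set Rs}})
  (phi : forall c, St c -> St c -> {set Rs} -> R) : Prop :=
  forall c (u : pol Adm c), unique_recurrent_class phi u.

(* eta is a stationary distribution of the continuous-time chain with
   generator lambda (phi^{c,u} - I) (column convention: (phi^{c,u}-I) eta = 0) *)
Definition ct_stationary (R : realType) (Rs Cl : finType) (St : Cl -> finType)
  (Adm : forall c, St c -> {set {set Rs}})
  (phi : forall c, St c -> St c -> {set Rs} -> R) (lam : R)
  (c : Cl) (u : pol Adm c) (eta : St c -> R) : Prop :=
  (forall s, 0 <= eta s) /\ \sum_s eta s = 1 /\
  forall s, \sum_s' lam * (Phi phi u s s' - (s == s')%:R) * eta s' = 0.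

(* coordinates of x in R^n, n = sum_c n^c, indexed by pairs (c,u) *)
Definition coord (R : realType) (I : finType) (x : 'rV[R]_#|I|) (i : I) : R :=
  x ord0 (enum_rank i).

Definition sigma (R : realType) (Rs Cl : finType) (St : Cl -> finType)
  (Adm : forall c, St c -> {set {set Rs}}) (lam : R)
  (eta : forall c, pol Adm c -> St c -> R)
  (x : 'rV[R]_#|idx Adm|) (r : Rs) : R :=
  lam * \sum_(i : idx Adm) \sum_(s : St (tag i) | r \in val (tagged i) s)
          eta (tag i) (tagged i) s * coord x i.

Definition payoff (R : realType) (Rs Cl : finType) (St : Cl -> finType)
  (Adm : forall c, St c -> {set {set Rs}}) (lam : R)
  (eta : forall c, pol Adm c -> St c -> R) (w : Rs -> R -> R)
  (i : idx Adm) (x : 'rV[R]_#|idx Adm|) : R :=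
  \sum_(s : St (tag i)) eta (tag i) (tagged i) s *
     \sum_(r in val (tagged i) s) w r (sigma lam eta x r).

Definition Xset (R : realType) (Rs Cl : finType) (St : Cl -> finType)
  (Adm : forall c, St c -> {set {set Rs}}) (mass : Cl -> R)
  (x : 'rV[R]_#|idx Adm|) : Prop :=
  (forall i, 0 <= coord x i) /\
  forall c, \sum_(u : pol Adm c) coord x (Tagged (pol Adm) u) = mass c.

Definition nash (R : realType) (Rs Cl : finType) (St : Cl -> finType)
  (Adm : forall c, St c -> {set {set Rs}}) (mass : Cl -> R) (lam : R)
  (eta : forall c, pol Adm c -> St c -> R) (w : Rs -> R -> R)
  (x : 'rV[R]_#|idx Adm|) : Prop :=
  Xset mass x /\
  forall i, 0 < coord x i ->
    forall v : pol Adm (tag i),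
      payoff lam eta w (Tagged (pol Adm) v) x <= payoff lam eta w i x.

Definition basis_vec (R : realType) (I : finType) (i : I) : 'rV[R]_#|I| :=
  \row_j ((j == enum_rank i)%:R).

(* The payoff of a pure strategy i depends on x only through the resource flows
   sigma_r(x), which are linear in x: F_i(x) = sum_r load_r(i) w_r(sigma_r(x)) with
   sigma_r(e_i) = lam load_r(i).  Hence U(x) = lam^-1 sum_r W_r(sigma_r(x)), where W_r is
   a primitive of w_r, is a potential.  For nonincreasing rewards, adding the
   variational inequalities satisfied by two equilibria x and y gives
   sum_r (w_r(sigma_r x) - w_r(sigma_r y)) (sigma_r x - sigma_r y) >= 0, while
   monotonicity makes every term nonpositive.  So all equilibria see the same rewards
   w_r(sigma_r), hence the same payoffs, which makes the (closed and bounded)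
   equilibrium set convex; strict monotonicity then pins down sigma_r itself. *)

From Pilot Require Import Defs.
From HB Require Import structures.
From mathcomp Require Import all_boot all_order all_algebra.
From mathcomp Require Import all_classical all_reals all_analysis.
From mathcomp Require Import ring lra.
Set Implicit Arguments. Unset Strict Implicit. Unset Printing Implicit Defensive.
Import Order.TTheory GRing.Theory Num.Theory.
Import numFieldNormedType.Exports.
Local Open Scope classical_set_scope.
Local Open Scope ring_scope.

Section Primitive.
Context {R : realType} (f : R -> R).
Hypothesis cf : continuous f.
Local Notation mu := (@lebesgue_measure R).
Local Notation F a x := (parameterized_integral mu a x f).

Lemma continuous_segment_integrable (a b : R) :
  mu.-integrable `[a, b] (EFin \o f).
Proof.
apply: continuous_compact_integrable; first exact: segment_compact.
exact: continuous_subspaceT.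
Qed.

Lemma parameterized_integral_chasles (a b x : R) :
  a <= b -> b <= x -> F a x = F a b + F b x.
Proof.
move=> ab bx; have fax := continuous_segment_integrable a x.
have := @Rintegral_itvB R f (BLeft a) (BRight x) b fax.
rewrite !bnd_simp => /(_ ab bx).
rewrite Rintegral_itv_obnd_cbnd; last first.
  by apply: integrableS fax => //; apply: subset_itvr; rewrite bnd_simp.
rewrite /parameterized_integral => <-; lra.
Qed.

(* Any base point below both [0] and [z] gives the same value. *)
Definition primitive (z : R) : R :=
  F (Num.min z 0 - 1) z - F (Num.min z 0 - 1) 0.

Lemma primitiveE (a z : R) : a <= z -> a <= 0 -> primitive z = F a z - F a 0.
Proof.
have base_shift (a1 a2 : R) : a1 <= a2 -> a2 <= z -> a2 <= 0 ->
    F a1 z - F a1 0 = F a2 z - F a2 0.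
  move=> a12 a2z a20.
  rewrite (parameterized_integral_chasles a12 a2z).
  rewrite (parameterized_integral_chasles a12 a20); lra.
have min0 : Num.min z 0 <= 0 by rewrite ge_min lexx orbT.
have minz : Num.min z 0 <= z by rewrite ge_min lexx.
move=> az a0; rewrite /primitive.
have [ab|ba] := lerP a (Num.min z 0 - 1).
  by rewrite (base_shift a (Num.min z 0 - 1)) //; lra.
by rewrite (base_shift (Num.min z 0 - 1) a) //; lra.
Qed.

Lemma is_derive_primitive (z : R) : is_derive z 1 primitive (f z).
Proof.
set a := Num.min z 0 - 1.
have min0 : Num.min z 0 <= 0 by rewrite ge_min lexx orbT.
have minz : Num.min z 0 <= z by rewrite ge_min lexx.
have az : a < z by rewrite /a; lra.
have a0 : a <= 0 by rewrite /a; lra.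
have z_lt_z1 : z < z + 1 by rewrite ltrDl.
have aBz : (BLeft a < BRight z)%E by rewrite /= lte_fin.
have [dF F'] := @continuous_FTC1 R f (BLeft a) z (z + 1) z_lt_z1
   (continuous_segment_integrable a (z + 1)) aBz (@cf z).
have dF1 : is_derive z 1 (fun x => F a x) (f z).
  by rewrite -F' derive1E; exact: derivableP.
have := is_deriveB dF1 (is_derive_cst (F a 0) z 1); rewrite subr0.
apply: near_eq_is_derive; near=> y; rewrite /= (primitiveE (a := a)) //.
by apply: ltW; near: y; exact: lt_nbhsr.
Unshelve. all: by end_near.
Qed.

End Primitive.

Section RealValuedDerivatives.
Context {R : numFieldType} {V : normedModType R}.

Lemma differentiable_big (T : Type) (s : seq T) (g : T -> V -> R) (x : V) :
  (forall t, differentiable (g t) x) ->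
  differentiable (fun y => \sum_(t <- s) g t y) x.
Proof.
move=> dg; elim: s => [|t s IH].
  under eq_fun => y do rewrite big_nil.
  exact: differentiable_cst.
under eq_fun => y do rewrite big_cons.
exact: differentiableD.
Qed.

Lemma is_derive_big (T : Type) (s : seq T) (g : T -> V -> R) (dg : T -> R)
    (x v : V) :
  (forall t, is_derive x v (g t) (dg t)) ->
  is_derive x v (fun y => \sum_(t <- s) g t y) (\sum_(t <- s) dg t).
Proof.
move=> gx; elim: s => [|t s IH].
  rewrite big_nil; under eq_fun => y do rewrite big_nil.
  exact: is_derive_cst.
rewrite big_cons; under eq_fun => y do rewrite big_cons.
exact: is_deriveD.
Qed.

Lemma is_derive_comp1 (f : V -> R) (g : R -> R) (x v : V) (df dg : R) :
  differentiable f x -> is_derive x v f df -> is_derive (f x) 1 g dg ->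
  is_derive x v (g \o f) (dg * df).
Proof.
move=> fx [_ fE] [/derivable1_diffP gx gE].
have gfx : differentiable (g \o f) x by exact: differentiable_comp.
apply: DeriveDef; first exact: diff_derivable.
rewrite deriveE // diff_comp // /= -(deriveE v fx) fE diff1E // derive1E gE.
by rewrite mulrC.
Qed.

Lemma is_derive_affine (f : V -> R) (x v : V) (c : R) :
  (forall h : R, f (h *: v + x) = f x + h * c) -> is_derive x v f c.
Proof.
move=> fE.
have slope : (fun h : R => h^-1 *: (f (h *: v + x) - f x)) @ 0^' --> c.
  apply: cvg_near_cst; near=> h.
  rewrite fE addrC addKr scalerA mulVf ?scale1r //.
  by near: h; exact: nbhs_dnbhs_neq.
by apply: DeriveDef; [apply/cvg_ex; exists c | exact: cvg_lim].
Unshelve. all: by end_near.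
Qed.

End RealValuedDerivatives.

Section Nonincreasing.
Context {R : realDomainType} (f : R -> R).
Hypothesis f_nincr : {in `[0, +oo[ &, {homo f : a b /~ a <= b}}.

Let f_le (a b : R) : 0 <= a -> 0 <= b -> a <= b -> f b <= f a.
Proof. by move=> a0 b0; apply: f_nincr; rewrite in_itv /= ?a0 ?b0. Qed.

Lemma nonincr_mul_subr_le0 (a b : R) :
  0 <= a -> 0 <= b -> (f a - f b) * (a - b) <= 0.
Proof.
move=> a0 b0; have [ab|ba] := lerP a b.
  by have := f_le a0 b0 ab; nra.
by have := f_le b0 a0 (ltW ba); nra.
Qed.

Lemma nonincr_eq_conv (a b t : R) : 0 <= a -> 0 <= b -> 0 <= t <= 1 ->
  f a = f b -> f (t * a + (1 - t) * b) = f a.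
Proof.
move=> a0 b0 /andP[t0 t1] fab.
wlog ab : a b a0 b0 t t0 t1 fab / a <= b.
  move=> hwlog; have [|ba] := lerP a b; first exact: hwlog.
  have -> : t * a + (1 - t) * b = (1 - t) * b + (1 - (1 - t)) * a by ring.
  by rewrite fab; apply: hwlog => //; lra.
have c0 : 0 <= t * a + (1 - t) * b by rewrite addr_ge0 ?mulr_ge0 ?subr_ge0.
have ac : a <= t * a + (1 - t) * b by nra.
have cb : t * a + (1 - t) * b <= b by nra.
by apply/eqP; rewrite eq_le f_le //= fab f_le.
Qed.

End Nonincreasing.

Lemma equilibrium_weighted_sum_le {R : realDomainType} {T : finType}
    (F X Y : T -> R) :
  (forall u, 0 <= X u) -> (forall u, 0 <= Y u) ->
  (forall u v, 0 < X u -> F v <= F u) ->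
  (\sum_u X u) * (\sum_u F u * Y u) <= (\sum_u Y u) * (\sum_u F u * X u).
Proof.
move=> X0 Y0 XF; rewrite !mulr_suml.
under eq_bigr => v _ do rewrite mulr_sumr.
under [X in _ <= X]eq_bigr => u _ do rewrite mulr_sumr.
rewrite [X in _ <= X]exchange_big; apply: ler_sum => v _; apply: ler_sum => u _.
have [Xv|Xv] := eqVneq (X v) 0; first by rewrite Xv !(mul0r, mulr0).
have /(XF v u) Fuv : 0 < X v by rewrite lt_def Xv X0.
have := mulr_ge0 (X0 v) (Y0 u); nra.
Qed.

Lemma preimage_closed_continuous {T U : topologicalType} (g : T -> U) (A : set U) :
  continuous g -> closed A -> closed (g @^-1` A).
Proof. by move=> cg; apply: preimage_closed => x _; exact: cg. Qed.

Section CongestionGame.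
Variables (R : realType) (Cl Rs : finType) (St : Cl -> finType)
  (Adm : forall c, St c -> {set {set Rs}}) (mass : Cl -> R) (lam : R)
  (eta : forall c, pol Adm c -> St c -> R) (w : Rs -> R -> R).
Arguments eta : clear implicits.
Hypotheses (mass_gt0 : forall c, 0 < mass c) (lam_gt0 : 0 < lam)
  (eta_ge0 : forall c u s, 0 <= eta c u s).

Local Notation I := (idx Adm).
Local Notation V := 'rV[R]_#|I|.
Local Notation sigma := (sigma lam eta).
Local Notation payoff := (payoff lam eta w).
Local Notation nash := (nash mass lam eta w).

Definition load (r : Rs) (i : I) : R :=
  \sum_(s : St (tag i) | r \in val (tagged i) s) eta (tag i) (tagged i) s.

Lemma sigmaE (x : V) r : sigma x r = lam * \sum_i load r i * Defs.coord x i.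
Proof.
congr (_ * _); apply: eq_bigr => i _.
by rewrite /load mulr_suml.
Qed.

Lemma payoffE i (x : V) : payoff i x = \sum_r load r i * w r (sigma x r).
Proof.
rewrite /Defs.payoff /load.
under eq_bigr => s _ do rewrite mulr_sumr big_mkcond /=.
rewrite exchange_big /=; apply: eq_bigr => r _.
rewrite mulr_suml [RHS]big_mkcond /=; apply: eq_bigr => s _.
by case: ifP; rewrite ?mul0r.
Qed.

Lemma coord_comb (a b : R) (x y : V) i :
  Defs.coord (a *: x + b *: y) i = a * Defs.coord x i + b * Defs.coord y i.
Proof. by rewrite /Defs.coord !mxE. Qed.

Lemma sigma_comb (a b : R) (x y : V) r :
  sigma (a *: x + b *: y) r = a * sigma x r + b * sigma y r.
Proof.
rewrite !sigmaE mulrCA [b * _]mulrCA -mulrDr; congr (_ * _).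
rewrite !mulr_sumr -big_split /=; apply: eq_bigr => i _.
by rewrite coord_comb; ring.
Qed.

Lemma sigma_basis i r : sigma (basis_vec R i) r = lam * load r i.
Proof.
rewrite sigmaE (bigD1 i) //= /Defs.coord mxE eqxx mulr1 big1 ?addr0 // => j ji.
by rewrite mxE (inj_eq enum_rank_inj) (negPf ji) mulr0.
Qed.

Lemma sigma_ge0 (x : V) r : (forall i, 0 <= Defs.coord x i) -> 0 <= sigma x r.
Proof.
move=> x0; rewrite sigmaE; apply: mulr_ge0; first exact: ltW.
apply: sumr_ge0 => i _; apply: mulr_ge0 => //.
by apply: sumr_ge0 => s _.
Qed.

Lemma differentiable_sigma (x : V) r : differentiable (sigma ^~ r) x.
Proof.
under eq_fun => y do rewrite sigmaE.
apply: differentiableZ; apply: differentiable_big => i.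
exact/differentiableZ/differentiable_coord.
Qed.

Lemma is_derive_sigma (x : V) i r :
  is_derive x (basis_vec R i) (sigma ^~ r) (lam * load r i).
Proof.
apply: is_derive_affine => h.
by rewrite -[x in _ + x]scale1r sigma_comb sigma_basis mul1r addrC.
Qed.

Lemma big_idx (G : I -> R) :
  \sum_i G i = \sum_c \sum_(u : pol Adm c) G (Tagged (pol Adm) u).
Proof.
rewrite (sig_big_dep (fun _ => true) (fun _ _ => true)
          (fun c (u : pol Adm c) => G (Tagged (pol Adm) u))) /=.
by apply: eq_bigr => -[c u].
Qed.

Lemma nash_variational_ineq (x y : V) : nash x -> Xset mass y ->
  \sum_i payoff i x * Defs.coord y i <= \sum_i payoff i x * Defs.coord x i.
Proof.
move=> [[x0 xm] xN] [y0 ym]; rewrite !big_idx; apply: ler_sum => c _.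
rewrite -(ler_pM2l (mass_gt0 c)) -{1}(xm c) -(ym c).
by apply: equilibrium_weighted_sum_le => [u|u|u v /xN]; [exact: x0 | exact: y0 |].
Qed.

Lemma sum_payoff_mul (x y : V) :
  lam * \sum_i payoff i x * Defs.coord y i = \sum_r w r (sigma x r) * sigma y r.
Proof.
under eq_bigr => i _ do rewrite payoffE mulr_suml.
rewrite exchange_big mulr_sumr; apply: eq_bigr => r _.
rewrite [sigma y r]sigmaE [RHS]mulrCA; congr (_ * _); rewrite [RHS]mulr_sumr.
by apply: eq_bigr => i _; rewrite mulrCA mulrA.
Qed.

Lemma nash_flow_ineq (x y : V) : nash x -> Xset mass y ->
  \sum_r w r (sigma x r) * sigma y r <= \sum_r w r (sigma x r) * sigma x r.
Proof.
by move=> xN yX; rewrite -!sum_payoff_mul ler_pM2l //; exact: nash_variational_ineq.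
Qed.

Section NonincreasingRewards.
Hypothesis w_nincr : forall r, {in `[0, +oo[ &, {homo w r : a b /~ a <= b}}.

Lemma nash_reward_eq (x y : V) r : nash x -> nash y ->
  w r (sigma x r) = w r (sigma y r).
Proof.
move=> xN yN.
pose T r' := (w r' (sigma x r') - w r' (sigma y r')) * (sigma x r' - sigma y r').
have T_le0 r' : T r' <= 0.
  apply: (nonincr_mul_subr_le0 (w_nincr r')); apply: sigma_ge0.
    by case: xN => -[].
  by case: yN => -[].
have sumT_ge0 : 0 <= \sum_r T r.
  have -> : \sum_r T r =
      (\sum_r w r (sigma x r) * sigma x r - \sum_r w r (sigma x r) * sigma y r) +
      (\sum_r w r (sigma y r) * sigma y r - \sum_r w r (sigma y r) * sigma x r).
    by rewrite -!sumrB -big_split; apply: eq_bigr => r' _; rewrite /T /=; ring.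
  by rewrite addr_ge0 // subr_ge0 nash_flow_ineq //; [case: yN | case: xN].
have : T r = 0.
  apply/eqP; rewrite eq_le T_le0 (le_trans sumT_ge0) // (bigD1 r) //= gerDl.
  by apply: sumr_le0 => r' _.
by move/eqP; rewrite mulf_eq0 !subr_eq0 => /orP[/eqP // | /eqP ->].
Qed.

Lemma nash_payoff_eq (x y : V) i : nash x -> nash y -> payoff i x = payoff i y.
Proof.
move=> xN yN; rewrite !payoffE; apply: eq_bigr => r _.
by rewrite (nash_reward_eq r xN yN).
Qed.

Lemma nash_conv (x y : V) t : 0 <= t <= 1 -> nash x -> nash y ->
  nash (t *: x + (1 - t) *: y).
Proof.
move=> t01 xN yN; have /andP[t0 t1] := t01.
move: (xN) (yN) => [[x0 xm] xBR] [[y0 ym] yBR].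
have zF i : payoff i (t *: x + (1 - t) *: y) = payoff i x.
  rewrite !payoffE; apply: eq_bigr => r _; rewrite sigma_comb.
  by rewrite nonincr_eq_conv ?sigma_ge0 // (nash_reward_eq r xN yN).
split; first split.
- by move=> i; rewrite coord_comb addr_ge0 ?mulr_ge0 ?subr_ge0.
- move=> c; under eq_bigr => u _ do rewrite coord_comb.
  by rewrite big_split /= -!mulr_sumr xm ym -mulrDl addrC subrK mul1r.
move=> i zi v; rewrite !zF.
have [xi|xi] := ltrP 0 (Defs.coord x i); first exact: xBR.
rewrite !(nash_payoff_eq _ xN yN); apply: yBR.
rewrite lt_def y0 andbT; move: zi; rewrite coord_comb; apply: contraTneq => ->.
by rewrite mulr0 addr0 -leNgt mulr_ge0_le0.
Qed.

End NonincreasingRewards.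

Lemma nash_sigma_eq
    (w_decr : forall r, {in `[0, +oo[ &, {homo w r : a b /~ a < b}})
    (x y : V) r : nash x -> nash y -> sigma x r = sigma y r.
Proof.
move=> xN yN.
have w_eq := nash_reward_eq (fun r => ltW_nhomo_in (w_decr r)) r xN yN.
have sx : sigma x r \in `[0, +oo[ by rewrite in_itv /= sigma_ge0 //; case: xN => -[].
have sy : sigma y r \in `[0, +oo[ by rewrite in_itv /= sigma_ge0 //; case: yN => -[].
have mono := le_nmono_in (w_decr r).
by apply/eqP; rewrite eq_le -(mono _ _ sx sy) -(mono _ _ sy sx) w_eq lexx.
Qed.

Section DerivableRewards.
Hypothesis w_derivable : forall r z, derivable (w r) z 1.

Let is_derive_primitive_w r (z : R) : is_derive z 1 (primitive (w r)) (w r z).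
Proof.
by apply: is_derive_primitive => y; apply/differentiable_continuous/derivable1_diffP.
Qed.

Lemma differentiable_payoff i (x : V) : differentiable (payoff i) x.
Proof.
rewrite (funext (payoffE i)).
apply: differentiable_big => r; apply: differentiableZ.
apply: differentiable_comp; first exact: differentiable_sigma.
exact/derivable1_diffP.
Qed.

Definition potential (x : V) : R := lam^-1 * \sum_r primitive (w r) (sigma x r).

Lemma differentiable_potential (x : V) : differentiable potential x.
Proof.
apply: differentiableZ; apply: differentiable_big => r.
apply: differentiable_comp; first exact: differentiable_sigma.
by apply/derivable1_diffP; case: (is_derive_primitive_w r (sigma x r)).
Qed.

Lemma derive_potential (x : V) i : 'D_(basis_vec R i) potential x = payoff i x.
Proof.
have dU r : is_derive x (basis_vec R i) (primitive (w r) \o sigma^~ r)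
    (w r (sigma x r) * (lam * load r i)).
  apply: is_derive_comp1; first exact: differentiable_sigma.
    exact: is_derive_sigma.
  exact: is_derive_primitive_w.
have /(@derive_val _ _ _ _ _ _ _) -> :=
  is_deriveZ lam^-1 (is_derive_big (index_enum Rs) dU).
rewrite payoffE scaler_sumr; apply: eq_bigr => r _.
change (lam^-1 * (w r (sigma x r) * (lam * load r i)) = load r i * w r (sigma x r)).
by field; rewrite gt_eqF.
Qed.

Lemma nash_setE : [set x : V | nash x] =
  \bigcap_i [set x | 0 <= Defs.coord x i] `&`
  \bigcap_c [set x | \sum_(u : pol Adm c) Defs.coord x (Tagged (pol Adm) u) = mass c] `&`
  \bigcap_i \bigcap_(v : pol Adm (tag i))
    [set x | 0 <= Defs.coord x i * (payoff i x - payoff (Tagged (pol Adm) v) x)].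
Proof.
apply/seteqP; split => x /=.
  move=> [[x0 xm] xBR]; split; first by split=> [i|c] _; [exact: x0 | exact: xm].
  move=> i _ v _ /=; have := x0 i; rewrite le_eqVlt => /orP[/eqP <-|xi].
    by rewrite mul0r.
  by apply: mulr_ge0; [exact: ltW | rewrite subr_ge0; exact: xBR].
move=> [[x0 xm] xBR]; split; first by split=> [i|c]; [exact: x0 | exact: xm].
by move=> i xi v; have /= := xBR i Logic.I v Logic.I; rewrite pmulr_rge0 // subr_ge0.
Qed.

Lemma closed_nash : closed [set x : V | nash x].
Proof.
have coord_cont i : continuous (fun x : V => Defs.coord x i).
  by move=> x; exact: coord_continuous.
rewrite nash_setE; apply: closedI; first apply: closedI.
- apply: closed_bigI => i _.
  exact: (preimage_closed_continuous (coord_cont i) (@closed_ge _ 0)).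
- apply: closed_bigI => c _.
  apply: (preimage_closed_continuous _ (@closed_eq _ (mass c))) => x.
  apply/differentiable_continuous/differentiable_big => u.
  exact: differentiable_coord.
- apply: closed_bigI => i _; apply: closed_bigI => v _.
  apply: (preimage_closed_continuous _ (@closed_ge _ 0)) => x.
  apply/differentiable_continuous/differentiableM; first exact: differentiable_coord.
  by apply: differentiableB; exact: differentiable_payoff.
Qed.

Lemma nash_bounded :
  [set x : V | nash x] `<=` [set x | forall j, `[0, \sum_c mass c]%classic (x ord0 j)].
Proof.
move=> x [[x0 xm] _] j.
have -> : x ord0 j = Defs.coord x (enum_val j) by rewrite /Defs.coord enum_valK.
case: (enum_val j) => c u; rewrite /= in_itv /= x0 /=.
apply: (@le_trans _ _ (mass c)).
  by rewrite -(xm c) (bigD1 u) //= lerDl; apply: sumr_ge0 => v _.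
by rewrite (bigD1 c) //= lerDl; apply: sumr_ge0 => d _; exact: ltW.
Qed.

Lemma compact_nash : compact [set x : V | nash x].
Proof.
pose M := \sum_c mass c.
have box := @rV_compact R #|I| (fun=> `[0, M]%classic) (fun=> @segment_compact R 0 M).
exact: subclosed_compact closed_nash box nash_bounded.
Qed.

End DerivableRewards.

End CongestionGame.

Theorem lemma4 (R : realType) (Cl Rs : finType) (St : Cl -> finType)
  (mass : Cl -> R)
  (Adm : forall c, St c -> {set {set Rs}})
  (phi : forall c, St c -> St c -> {set Rs} -> R)
  (lam : R)
  (eta : forall c, pol Adm c -> St c -> R)
  (w : Rs -> R -> R)
  (hmass : forall c, 0 < mass c)
  (hAdm : forall c s, exists a, a \in Adm c s)
  (hphi0 : forall c s' s a, a \in Adm c s -> 0 <= phi c s' s a)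
  (hphi1 : forall c s a, a \in Adm c s -> \sum_(s' : St c) phi c s' s a = 1)
  (hlam : 0 < lam)
  (hA2 : A2 Adm phi)
  (heta : forall c (u : pol Adm c), ct_stationary phi lam u (eta c u))
  (hwd : forall r x, derivable (w r) x 1)
  (hwc : forall r, continuous (derive1 (w r))) :
  (exists U : 'rV[R]_#|idx Adm| -> R,
      (forall x, differentiable U x) /\
      (forall i : idx Adm, continuous (fun x => 'D_(basis_vec R i) U x)) /\
      (forall x, Xset mass x ->
         forall i : idx Adm, payoff lam eta w i x = 'D_(basis_vec R i) U x))
  /\
  ((forall r, {in `[0, +oo[ &, {homo w r : a b /~ a <= b}}) ->
      compact [set x | nash mass lam eta w x] /\
      convex_set ([set x | nash mass lam eta w x]
                    : set (convex_lmodType 'rV[R]_#|idx Adm|)))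
  /\
  ((forall r, {in `[0, +oo[ &, {homo w r : a b /~ a < b}}) ->
      forall x y, nash mass lam eta w x -> nash mass lam eta w y ->
        forall r, sigma lam eta x r = sigma lam eta y r).
Proof.
have eta_ge0 c u s : 0 <= eta c u s by have [] := heta c u.
split.
  exists (potential lam eta w); split; first exact: differentiable_potential.
  split=> [i|x _ i]; last by rewrite derive_potential.
  rewrite (funext (derive_potential eta hlam hwd ^~ i)).
  by move=> x; apply/differentiable_continuous/differentiable_payoff.
split=> [w_nincr | w_decr x y xN yN r]; last exact: nash_sigma_eq.
split; first exact: compact_nash.
move=> x y t; rewrite !inE => xN yN.
by apply: nash_conv; rewrite ?ge0 ?le1.
Qed.
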